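(* Let $X$ be a Banach space and let $q\geq2$. The following are equivalent: (i) $\mathcal F(X)$ has Rademacher cotype (resp. cotype $q$); (ii) $\mathcal F(K)$ has Rademacher cotype (resp. cotype $q$) for every compact set $K\subset X$; (ii') $\mathcal F(K)$ has Rademacher cotype (resp. cotype $q$) for every countable compact set $K\subset X$; (iii) $\mathcal F(\{x_n\}_n)$ has Rademacher cotype (resp. cotype $q$) for every null sequence $(x_n)_n\subset X$.
   Context: For a pointed metric space $M$ (the choice of base point does not affect the isomorphism class), $\mathrm{Lip}_0(M)$ is the Banach space of real Lipschitz functions vanishing at the base point normed by the Lipschitz constant, and $\mathcal F(M)=\overline{\mathrm{span}}\{\delta(x):x\in M\}\subset\mathrm{Lip}_0(M)^*$, $\delta(x)$ being evaluation at $x$. A Banach space has Rademacher cotype if it has cotype $q$ for some $q<\infty$. A null sequence is a sequence converging to $0$ in norm; $\{x_n\}_n$ denotes its set of terms with the metric from $X$. *)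

From HB Require Import structures.
From mathcomp Require Import all_boot all_order all_algebra.
From mathcomp Require Import all_classical all_reals all_analysis.
Set Implicit Arguments. Unset Strict Implicit. Unset Printing Implicit Defensive.
Import Order.TTheory GRing.Theory Num.Theory.
Import numFieldNormedType.Exports.
Local Open Scope classical_set_scope.
Local Open Scope ring_scope.

(* Lip_0(S) is modeled by functions f : X -> R (only the values on S matter)
   with f p = 0 and Lipschitz on S.  Elements of F(S) are modeled as
   (restrictions to the unit ball of Lip_0(S) of) functionals
   phi : (X -> R) -> R which are uniform limits on that ball of finite
   linear combinations of evaluations delta(y), y in S. *)

Section Free.
Context {R : realType} {X : normedModType R}.

Definition lip1_0 (S : set X) (p : X) (f : X -> R) : Prop :=
  f p = 0 /\ forall x y, S x -> S y -> `|f x - f y| <= `|x - y|.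

Definition in_free (S : set X) (p : X) (phi : (X -> R) -> R) : Prop :=
  forall e : R, 0 < e ->
    exists n (a : 'I_n -> R) (y : 'I_n -> X),
      (forall i, S (y i)) /\
      forall f, lip1_0 S p f -> `|phi f - \sum_(i < n) a i * f (y i)| <= e.

Definition free_norm (S : set X) (p : X) (phi : (X -> R) -> R) : R :=
  sup [set r | exists f, lip1_0 S p f /\ r = `|phi f|].

Definition sgn (b : bool) : R := if b then 1 else -1.

Definition free_cotype (q : R) (S : set X) (p : X) : Prop :=
  exists C : R, 0 < C /\
    forall n (phi : 'I_n -> (X -> R) -> R), (forall i, in_free S p (phi i)) ->
      (\sum_(i < n) free_norm S p (phi i) `^ q) `^ q^-1 <=
      C * Num.sqrt ((\sum_(e : {ffun 'I_n -> bool})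
                       free_norm S p (fun f => \sum_(i < n) sgn (e i) * phi i f) ^+ 2)
                    / 2 ^+ n).

Definition free_rad_cotype (S : set X) (p : X) : Prop :=
  exists q : R, 2 <= q /\ free_cotype q S p.

End Free.

From HB Require Import structures.
From mathcomp Require Import all_boot all_order all_algebra.
From mathcomp Require Import all_classical all_reals all_analysis.
From mathcomp Require Import ring lra zify.
Import Order.TTheory GRing.Theory Num.Theory.
Import numFieldNormedType.Exports.
Local Open Scope classical_set_scope.
Local Open Scope ring_scope.

Set Implicit Arguments. Unset Strict Implicit. Unset Printing Implicit Defensive.

(* Restricting and re-basing Lipschitz functions, together with McShane's extension,
   makes [F(T)] an isometric subspace of [F(S)] for [T ⊆ S], so cotype passes to
   subsets; the range of a null sequence, with [0] added, is countable and compact.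
   Conversely, if [F(X)] fails cotype [q], then for every [k] some finitely supported
   family in [F(X)] violates the cotype inequality with constant [k].  Dilating it by
   a small [t > 0], which is an isometry of free spaces, brings its support within
   [1 / (k + 1)] of the origin, and enumerating all these supports yields a single
   null sequence whose free space fails cotype [q].  For Rademacher cotype, stage [k]
   uses the exponent [k + 2]. *)

Section LqNorm.
Context {R : realType}.

Lemma powR_invK (x q : R) : 0 <= x -> 0 < q -> (x `^ q) `^ q^-1 = x.
Proof. by move=> x0 q0; rewrite -powRrM mulfV ?gt_eqF // powRr1. Qed.

Lemma sqr_le_2sqrD (u v c : R) : 0 <= v -> v <= u + c ->
  v ^+ 2 <= 2 * u ^+ 2 + 2 * c ^+ 2.
Proof.
move=> v0 vuc.
have h1 : 0 <= (u + c - v) * (u + c + v) by apply: mulr_ge0; lra.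
have h2 : 0 <= (u - c) ^+ 2 by apply: sqr_ge0.
nra.
Qed.

Lemma half_le_of_leD (a a' d : R) : 0 <= a' -> a <= a' + d ->
  (0 < a -> d <= a / 2) -> a / 2 <= a'.
Proof.
move=> a'0 close hd; have [a0|a_le0] := ltP 0 a; last lra.
by have := hd a0; lra.
Qed.

Variable n : nat.
Implicit Types (a : 'I_n -> R) (b : {ffun 'I_n -> bool} -> R).

Definition lq_norm (q : R) a := (\sum_(i < n) a i `^ q) `^ q^-1.

Definition rad_mean b := Num.sqrt ((\sum_e b e ^+ 2) / 2 ^+ n).

Lemma lq_norm_ge0 q a : 0 <= lq_norm q a.
Proof. exact: powR_ge0. Qed.

Lemma lq_norm_half q a a' : 0 < q -> (forall i, 0 <= a i) ->
  (forall i, a i / 2 <= a' i) -> lq_norm q a / 2 <= lq_norm q a'.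
Proof.
move=> q0 a0 aa'.
have h : 2^-1 `^ q * \sum_(i < n) a i `^ q <= \sum_(i < n) a' i `^ q.
  rewrite mulr_sumr; apply: ler_sum => i _.
  rewrite mulrC -powRM //; apply: ge0_ler_powR; rewrite ?nnegrE ?(ltW q0) //.
  - exact: mulr_ge0.
  - by apply: le_trans (aa' i); exact: mulr_ge0.
have S0 : 0 <= \sum_(i < n) a i `^ q by apply: sumr_ge0 => i _; exact: powR_ge0.
apply: le_trans (ge0_ler_powR _ _ _ h); rewrite ?nnegrE.
- by rewrite powRM ?powR_ge0 // powR_invK // mulrC.
- by rewrite invr_ge0 ltW.
- by apply: mulr_ge0 => //; exact: powR_ge0.
- by apply: sumr_ge0 => i _; exact: powR_ge0.
Qed.

Lemma lq_norm_ge_coord q a i : 0 < q -> (forall j, 0 <= a j) -> a i <= lq_norm q a.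
Proof.
move=> q0 a0; rewrite -(powR_invK (a0 i) q0) /lq_norm.
apply: ge0_ler_powR; rewrite ?nnegrE ?powR_ge0 ?invr_ge0 ?(ltW q0) //.
  by apply: sumr_ge0 => j _; exact: powR_ge0.
by rewrite (bigD1 i) //= lerDl; apply: sumr_ge0 => j _; exact: powR_ge0.
Qed.

Lemma lq_norm_antitone q q' a : 0 < q -> q <= q' -> (forall i, 0 <= a i) ->
  lq_norm q' a <= lq_norm q a.
Proof.
move=> q0 qq' a0; have q'0 : 0 < q' by apply: lt_le_trans qq'.
set S := lq_norm q a.
have aS i : a i <= S := lq_norm_ge_coord i q0 a0.
have [S00|Spos] := eqVneq S 0.
  have a00 i : a i = 0 by apply/eqP; rewrite eq_le a0 andbT -S00 aS.
  rewrite /lq_norm big1 ?powR0 ?S00 ?invr_eq0 ?gt_eqF //.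
  by move=> i _; rewrite a00 powR0 // gt_eqF.
have Sq : \sum_(i < n) a i `^ q = S `^ q.
  by rewrite /S /lq_norm powRAC powR_invK //; apply: sumr_ge0 => i _; exact: powR_ge0.
(* [a i ^ q' = a i ^ (q' - q) * a i ^ q <= S ^ (q' - q) * a i ^ q]; sum over [i]. *)
have h : \sum_(i < n) a i `^ q' <= S `^ q'.
  have powR_split x : x != 0 -> x `^ q' = x `^ (q' - q) * x `^ q.
    by move=> x0; rewrite -powRD ?subrK // x0 implybT.
  rewrite powR_split // -Sq mulr_sumr; apply: ler_sum => i _.
  have [->|ai0] := eqVneq (a i) 0; first by rewrite !powR0 ?gt_eqF // mulr0.
  rewrite powR_split // mulrC [X in _ <= X]mulrC.
  apply: ler_wpM2l; first exact: powR_ge0.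
  by apply: ge0_ler_powR; rewrite ?nnegrE ?subr_ge0 ?a0 ?aS ?lq_norm_ge0.
apply: le_trans (ge0_ler_powR _ _ _ h) _; rewrite ?nnegrE ?powR_ge0 ?invr_ge0 ?(ltW q'0) //.
  by apply: sumr_ge0 => i _; exact: powR_ge0.
by rewrite powR_invK ?lq_norm_ge0.
Qed.

Lemma rad_mean_ge0 b : 0 <= rad_mean b.
Proof. exact: sqrtr_ge0. Qed.

Lemma rad_mean_sqr_perturb b b' c : (forall e, 0 <= b' e) ->
  (forall e, b' e <= b e + c) -> rad_mean b' ^+ 2 <= 2 * rad_mean b ^+ 2 + 2 * c ^+ 2.
Proof.
move=> b'0 bb'.
have n2 : 0 < 2 ^+ n :> R by apply: exprn_gt0.
have mean_ge0 (d : {ffun 'I_n -> bool} -> R) : 0 <= (\sum_e d e ^+ 2) / 2 ^+ n.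
  by apply: divr_ge0; [apply: sumr_ge0 => e _; exact: sqr_ge0 | exact: ltW].
rewrite /rad_mean !sqr_sqrtr //.
have h : \sum_e b' e ^+ 2 <= \sum_(e : {ffun 'I_n -> bool}) (2 * b e ^+ 2 + 2 * c ^+ 2).
  by apply: ler_sum => e _; exact: sqr_le_2sqrD.
rewrite big_split /= -mulr_sumr sumr_const card_ffun card_bool card_ord in h.
rewrite -[_ *+ (2 ^ n)]mulr_natr natrX in h.
rewrite ler_pdivrMr //; apply: (le_trans h); rewrite le_eqVlt; apply/orP; left.
by apply/eqP; field; exact: lt0r_neq0.
Qed.

(* [(K rad_mean b')^2 <= 2 (K rad_mean b)^2 + 2 (K c)^2 < L^2 / 4]. *)
Lemma rad_mean_perturb b b' (K c L : R) : 0 < K -> 0 <= c ->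
  (forall e, 0 <= b' e) -> (forall e, b' e <= b e + c) ->
  4 * K * c <= L -> 4 * K * rad_mean b < L -> K * rad_mean b' < L / 2.
Proof.
move=> K0 c0 b'0 bb' hc hb.
have hsq := rad_mean_sqr_perturb b'0 bb'.
have x0 := rad_mean_ge0 b; have z0 := rad_mean_ge0 b'.
move: (rad_mean b) (rad_mean b') x0 z0 hsq hb => x z x0 z0 hsq hb.
have hK : (K * z) ^+ 2 <= 2 * (K * x) ^+ 2 + 2 * (K * c) ^+ 2.
  have -> : 2 * (K * x) ^+ 2 + 2 * (K * c) ^+ 2 = K ^+ 2 * (2 * x ^+ 2 + 2 * c ^+ 2).
    by ring.
  by rewrite exprMn ler_wpM2l // sqr_ge0.
have Kx0 : 0 <= K * x by rewrite mulr_ge0 // ltW.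
have Kz0 : 0 <= K * z by rewrite mulr_ge0 // ltW.
have Kc0 : 0 <= K * c by rewrite mulr_ge0 // ltW.
rewrite -!mulrA in hc hb.
move: (K * x) (K * z) (K * c) Kx0 Kz0 Kc0 hK hc hb => u w y u0 w0 y0 hK hc hb.
nra.
Qed.

End LqNorm.

Section FreeNorm.
Context {R : realType} {X : normedModType R}.
Implicit Types (S T A : set X) (p : X) (Phi Psi : (X -> R) -> R).

Definition lip_bounded S p Phi := exists B, forall f, lip1_0 S p f -> `|Phi f| <= B.

Lemma lip1_0_cst0 S p : lip1_0 S p (fun=> 0).
Proof. by split=> // x y _ _; rewrite subrr normr0. Qed.

Lemma free_norm_ge0 S p Phi : 0 <= free_norm S p Phi.
Proof.
rewrite /free_norm; set E := (X in sup X).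
have [ubE|nubE] := pselect (has_ubound E); last by rewrite sup_out // => -[].
apply: (@le_trans _ _ `|Phi (fun=> 0)|) => //; apply: ub_le_sup => //.
by exists (fun=> 0); split => //; exact: lip1_0_cst0.
Qed.

Lemma norm_le_free_norm S p Phi f : lip_bounded S p Phi -> lip1_0 S p f ->
  `|Phi f| <= free_norm S p Phi.
Proof.
move=> [B hB] hf; apply: ub_le_sup; last by exists f.
by exists B => r [g [hg ->]]; exact: hB.
Qed.

Lemma free_norm_le S p Phi c : (forall f, lip1_0 S p f -> `|Phi f| <= c) ->
  free_norm S p Phi <= c.
Proof.
move=> hc; apply: ge_sup; last by move=> r [g [hg ->]]; exact: hc.
by exists `|Phi (fun=> 0)|, (fun=> 0); split => //; exact: lip1_0_cst0.
Qed.

Lemma free_norm_leD S p Phi Psi d : lip_bounded S p Psi ->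
  (forall f, lip1_0 S p f -> `|Phi f - Psi f| <= d) ->
  free_norm S p Phi <= free_norm S p Psi + d.
Proof.
move=> bPsi hd; apply: free_norm_le => f hf.
have := ler_normD (Phi f - Psi f) (Psi f); rewrite subrK.
by have := hd f hf; have := norm_le_free_norm bPsi hf; lra.
Qed.

(* McShane: [G x = inf_{a in A} (g a + |x - a|)]. *)
Lemma mcshane_extension A (g : X -> R) : A !=set0 ->
  (forall x y, A x -> A y -> `|g x - g y| <= `|x - y|) ->
  exists G : X -> R, (forall x, A x -> G x = g x) /\
    forall x y, `|G x - G y| <= `|x - y|.
Proof.
move=> [a0 Aa0] hg.
pose E x := [set r | exists2 a, A a & r = g a + `|x - a|].
pose G x := inf (E x).
have lbE x : has_lbound (E x).
  exists (g a0 - `|x - a0|) => r [a Aa ->].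
  have h1 := hg _ _ Aa Aa0.
  have h2 : `|a - a0| <= `|x - a| + `|x - a0|.
    by have := ler_normD (a - x) (x - a0); rewrite addrA subrK [`|a - x|]distrC.
  move: h1; rewrite ler_norml => /andP[h1 _]; lra.
have neE x : E x !=set0 by exists (g a0 + `|x - a0|), a0.
have G_le x a : A a -> G x <= g a + `|x - a|.
  by move=> Aa; apply: ge_inf => //; exists a.
have le_G x b : (forall a, A a -> b <= g a + `|x - a|) -> b <= G x.
  by move=> hb; apply: lb_le_inf => // r [a Aa ->]; exact: hb.
have G_lip x y : G x - G y <= `|x - y|.
  suff : G x - `|x - y| <= G y by lra.
  apply: le_G => a Aa; have := G_le x a Aa.
  have : `|x - a| <= `|x - y| + `|y - a|.
    by have := ler_normD (x - y) (y - a); rewrite addrA subrK.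
  lra.
exists G; split.
  move=> x Ax; apply/eqP; rewrite eq_le; apply/andP; split.
    by have := G_le x x Ax; rewrite subrr normr0 addr0.
  by apply: le_G => a Aa; have := hg _ _ Ax Aa; rewrite ler_norml => /andP[_]; lra.
move=> x y; rewrite ler_norml G_lip andbT.
by have := G_lip y x; rewrite distrC; lra.
Qed.

Definition free_local A p Psi := forall f g, lip1_0 A p f -> lip1_0 A p g ->
  (forall x, A x -> f x = g x) -> Psi f = Psi g.

Lemma in_free_local S p Phi : in_free S p Phi -> free_local S p Phi.
Proof.
move=> hPhi f g hf hg hfg; apply/eqP/negPn/negP => hne.
have d0 : 0 < `|Phi f - Phi g| by rewrite normr_gt0 subr_eq0.
have [n [a [y [Sy hy]]]] := hPhi _ (divr_gt0 d0 (ltr0n _ 3)).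
have e1 := hy f hf; have e2 := hy g hg.
have fg_sum : \sum_(i < n) a i * g (y i) = \sum_(i < n) a i * f (y i).
  by apply: eq_bigr => i _; rewrite hfg.
rewrite fg_sum in e2.
have := ler_normD (Phi f - \sum_(i < n) a i * f (y i))
                  (\sum_(i < n) a i * f (y i) - Phi g).
by rewrite addrA subrK (distrC (\sum_(i < n) a i * f (y i))); lra.
Qed.

Lemma in_free_lip_bounded S p Phi : S p -> in_free S p Phi -> lip_bounded S p Phi.
Proof.
move=> Sp hPhi; have [n [a [y [Sy hy]]]] := hPhi 1 ltr01.
exists (1 + \sum_(i < n) `|a i| * `|y i - p|) => f hf.
have h1 := hy f hf.
have h2 : `|\sum_(i < n) a i * f (y i)| <= \sum_(i < n) `|a i| * `|y i - p|.
  apply: le_trans (ler_norm_sum _ _ _) _; apply: ler_sum => i _.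
  rewrite normrM ler_wpM2l //; case: hf => hf0 hf.
  by have := hf _ _ (Sy i) Sp; rewrite hf0 subr0.
have := ler_normD (Phi f - \sum_(i < n) a i * f (y i)) (\sum_(i < n) a i * f (y i)).
by rewrite subrK; lra.
Qed.

Lemma norm_sgn b : `|sgn b : R| = 1.
Proof. by case: b; rewrite /sgn ?normrN normr1. Qed.

Section SignedSum.
Variable n : nat.
Implicit Types (phi psi : 'I_n -> (X -> R) -> R) (e : {ffun 'I_n -> bool}).

Definition signed_sum phi e (f : X -> R) : R := \sum_(i < n) sgn (e i) * phi i f.

Definition free_lq q S p phi := lq_norm q (fun i => free_norm S p (phi i)).

Definition free_rademacher S p phi :=
  rad_mean (fun e => free_norm S p (signed_sum phi e)).

Definition cotype_fails q C S p phi := C * free_rademacher S p phi < free_lq q S p phi.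

Lemma signed_sum_dist phi psi e f :
  `|signed_sum phi e f - signed_sum psi e f| <= \sum_(i < n) `|phi i f - psi i f|.
Proof.
rewrite /signed_sum -sumrB; apply: le_trans (ler_norm_sum _ _ _) _.
by apply: ler_sum => i _; rewrite -mulrBr normrM norm_sgn mul1r.
Qed.

Lemma lip_bounded_signed_sum S p phi e : (forall i, lip_bounded S p (phi i)) ->
  lip_bounded S p (signed_sum phi e).
Proof.
move=> hb; exists (\sum_(i < n) free_norm S p (phi i)) => f hf.
apply: le_trans (ler_norm_sum _ _ _) _; apply: ler_sum => i _.
by rewrite normrM norm_sgn mul1r; exact: norm_le_free_norm.
Qed.

Lemma free_local_signed_sum A p phi e : (forall i, free_local A p (phi i)) ->
  free_local A p (signed_sum phi e).
Proof.
by move=> hloc f g hf hg hfg; apply: eq_bigr => i _; rewrite (hloc i f g).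
Qed.

Lemma free_lq_comp q S T p p' phi (g : (X -> R) -> X -> R) :
  (forall i, free_norm S p (phi i \o g) = free_norm T p' (phi i)) ->
  free_lq q S p (fun i => phi i \o g) = free_lq q T p' phi.
Proof. by move=> E; congr (_ `^ _); apply: eq_bigr => i _; rewrite E. Qed.

Lemma free_rademacher_comp S T p p' phi (g : (X -> R) -> X -> R) :
  (forall e, free_norm S p (signed_sum phi e \o g) = free_norm T p' (signed_sum phi e)) ->
  free_rademacher S p (fun i => phi i \o g) = free_rademacher T p' phi.
Proof.
by move=> E; congr (Num.sqrt (_ / _)); apply: eq_bigr => e _; rewrite -E.
Qed.

End SignedSum.

End FreeNorm.

Section Restriction.
Context {R : realType} {X : normedModType R}.
Implicit Types (S T : set X) (p : X) (Phi : (X -> R) -> R).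

Definition rebase p (f : X -> R) : X -> R := fun x => f x - f p.

Lemma lip1_0_rebase S T p (f : X -> R) : T `<=` S ->
  (forall x y, S x -> S y -> `|f x - f y| <= `|x - y|) -> lip1_0 T p (rebase p f).
Proof.
move=> TS hf; split; first by rewrite /rebase subrr.
by move=> x y Tx Ty; rewrite /rebase opprB addrA subrK; apply: hf; apply: TS.
Qed.

Lemma free_norm_rebase S T p p' Phi : T `<=` S -> T p -> S p' -> free_local T p Phi ->
  free_norm S p' (Phi \o rebase p) = free_norm T p Phi.
Proof.
move=> TS Tp Sp' hloc; rewrite /free_norm; congr sup.
apply/seteqP; split => r [f [hf ->]].
  by exists (rebase p f); split => //; apply: lip1_0_rebase TS _; case: hf.
have [G [GT Glip]] := mcshane_extension (ex_intro _ p Tp) (proj2 hf).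
have G_lip : forall x y, [set: X] x -> [set: X] y -> `|G x - G y| <= `|x - y|.
  by move=> x y _ _; exact: Glip.
exists (rebase p' G); split; first exact: lip1_0_rebase G_lip.
congr `|_|; apply: hloc => //=.
- apply: lip1_0_rebase (subsetT T) _ => x y _ _.
  by rewrite /rebase opprB addrA subrK; exact: Glip.
- by move=> x Tx; rewrite /rebase (GT x) // (GT p) //; case: hf => -> _; lra.
Qed.

Lemma in_free_rebase S T p p' Phi : T `<=` S -> T p -> in_free T p Phi ->
  in_free S p' (Phi \o rebase p).
Proof.
move=> TS Tp hPhi e e0; have [n [a [y [Ty hy]]]] := hPhi e e0.
exists n.+1, (fun i => if unlift ord0 i is Some j then a j else - \sum_(j < n) a j),
  (fun i => if unlift ord0 i is Some j then y j else p); split.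
  by move=> i; case: (unlift ord0 i) => [j|]; apply: TS.
move=> f [_ hf]; rewrite big_ord_recl unlift_none.
under [X in - _ * f p + X]eq_bigr => i _ do rewrite liftK.
have := hy _ (lip1_0_rebase p TS hf).
suff -> : \sum_(i < n) a i * rebase p f (y i) =
  - (\sum_(j < n) a j) * f p + \sum_(i < n) a i * f (y i) by [].
rewrite mulNr mulr_suml -sumrN -big_split /=; apply: eq_bigr => i _.
by rewrite /rebase; lra.
Qed.

Lemma free_cotype_restrict q S T p p' : T `<=` S -> T p -> S p' ->
  free_cotype q S p' -> free_cotype q T p.
Proof.
move=> TS Tp Sp' [C [C0 hC]]; exists C; split => // n phi hphi.
have hloc i := in_free_local (hphi i).
have lq_eq : free_lq q S p' (fun i => phi i \o rebase p) = free_lq q T p phi.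
  by apply: free_lq_comp => i; exact: free_norm_rebase.
have rad_eq : free_rademacher S p' (fun i => phi i \o rebase p) = free_rademacher T p phi.
  apply: free_rademacher_comp => e; apply: free_norm_rebase TS Tp Sp' _.
  exact: free_local_signed_sum.
have := hC n _ (fun i => in_free_rebase p' TS Tp (hphi i)).
by change (free_lq q S p' (fun i => phi i \o rebase p) <=
          C * free_rademacher S p' (fun i => phi i \o rebase p) ->
        free_lq q T p phi <= C * free_rademacher T p phi); rewrite lq_eq rad_eq.
Qed.

Lemma free_rad_cotype_restrict S T p p' : T `<=` S -> T p -> S p' ->
  free_rad_cotype S p' -> free_rad_cotype T p.
Proof.
move=> TS Tp Sp' [q [q2 hq]]; exists q; split => //.
exact: free_cotype_restrict TS Tp Sp' hq.
Qed.

End Restriction.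

Section PointComb.
Context {R : realType} {X : normedModType R}.
Implicit Types (A T : set X) (p : X) (s : seq (R * X)) (Psi : (X -> R) -> R).

Definition point_comb s (f : X -> R) : R := \sum_(c <- s) c.1 * f c.2.

Definition dilate (t : R) (f : X -> R) : X -> R := fun x => f (t *: x) / t.

Lemma point_comb_lip_bounded s : lip_bounded setT 0 (point_comb s).
Proof.
exists (\sum_(c <- s) `|c.1| * `|c.2|) => f [f0 hf].
apply: le_trans (ler_norm_sum _ _ _) _; apply: ler_sum => c _.
by rewrite normrM ler_wpM2l //; have := hf c.2 0 I I; rewrite f0 !subr0.
Qed.

Lemma free_local_point_comb A p s : (forall c, c \in s -> A c.2) ->
  free_local A p (point_comb s).
Proof.
by move=> sA f g _ _ hfg; apply: eq_big_seq => c cs; rewrite hfg //; exact: sA.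
Qed.

Lemma in_free_point_comb T p s : (forall c, c \in s -> T c.2) ->
  in_free T p (point_comb s).
Proof.
move=> sT e e0.
exists (size s), (fun i => (nth (0, 0) s i).1), (fun i => (nth (0, 0) s i).2).
split=> [i|f _]; first by apply: sT; exact: mem_nth.
by rewrite /point_comb (big_nth (0, 0)) big_mkord subrr normr0 ltW.
Qed.

Lemma point_comb_approx n (phi : 'I_n -> (X -> R) -> R) (delta : 'I_n -> R) :
  (forall i, in_free setT 0 (phi i)) -> (forall i, 0 < delta i) ->
  exists s : 'I_n -> seq (R * X), forall i f, lip1_0 setT 0 f ->
    `|phi i f - point_comb (s i) f| <= delta i.
Proof.
move=> hphi delta0.
suff /choice[s hs] : forall i, exists s, forall f, lip1_0 setT 0 f ->
  `|phi i f - point_comb s f| <= delta i by exists s.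
move=> i.
have [m [a [y [_ hy]]]] := hphi i (delta i) (delta0 i).
exists [seq (a j, y j) | j <- index_enum 'I_m] => f hf.
by rewrite /point_comb big_map; exact: hy.
Qed.

Lemma point_comb_dilate t s :
  point_comb s \o dilate t = point_comb [seq (c.1 / t, t *: c.2) | c <- s].
Proof.
apply/funext => f; rewrite /point_comb big_map /=.
by apply: eq_bigr => c _; rewrite /dilate mulrA mulrAC.
Qed.

Lemma free_norm_dilate A T t Psi : 0 < t -> A 0 -> (forall a, A a -> T (t *: a)) ->
  free_local A 0 Psi -> free_norm T 0 (Psi \o dilate t) = free_norm setT 0 Psi.
Proof.
move=> t0 A0 AT hloc; rewrite /free_norm; congr sup.
apply/seteqP; split => r [g [[g0 hg] ->]].
  have dg_lip a b : A a -> A b -> `|dilate t g a - dilate t g b| <= `|a - b|.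
    move=> Aa Ab; rewrite /dilate -mulrBl normrM normfV (gtr0_norm t0).
    rewrite ler_pdivrMr // mulrC.
    have -> : t * `|a - b| = `|t *: a - t *: b| by rewrite -scalerBr normrZ gtr0_norm.
    by apply: hg; exact: AT.
  have [G [GA Glip]] := mcshane_extension (ex_intro _ 0 A0) dg_lip.
  have dg0 : dilate t g 0 = 0 by rewrite /dilate scaler0 g0 mul0r.
  have G0 : G 0 = 0 by rewrite GA.
  exists G; split; first by split=> // x y _ _; exact: Glip.
  congr `|_|; apply: (hloc _ _ (conj dg0 dg_lip)).
    by split=> // x y _ _; exact: Glip.
  by move=> x Ax; rewrite GA.
exists (fun x => t * g (t^-1 *: x)); split.
  split=> [|x y _ _]; first by rewrite scaler0 g0 mulr0.
  rewrite -mulrBr normrM (gtr0_norm t0).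
  apply: le_trans (ler_wpM2l (ltW t0) (hg _ _ I I)) _.
  by rewrite -scalerBr normrZ normfV (gtr0_norm t0) mulrA mulfV ?gt_eqF // mul1r.
congr `|Psi _|; apply/funext => x.
by rewrite /dilate scalerA mulVf ?gt_eqF // scale1r [t * _]mulrC mulfK ?gt_eqF.
Qed.

Lemma cotype_fails_dilate q K T t n (s : 'I_n -> seq (R * X)) : 0 < t -> T 0 ->
  (forall i c, c \in s i -> T (t *: c.2)) ->
  cotype_fails q K setT 0 (fun i => point_comb (s i)) ->
  cotype_fails q K T 0 (fun i => point_comb (s i) \o dilate t).
Proof.
move=> t0 T0 sT.
pose A := [set a : X | a = 0 \/ exists i c, c \in s i /\ a = c.2].
have A0 : A 0 by left.
have AT a : A a -> T (t *: a).
  by case=> [->|[i [c [cs ->]]]]; [rewrite scaler0 | exact: sT cs].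
have hloc i : free_local A 0 (point_comb (s i)).
  by apply: free_local_point_comb => c cs; right; exists i, c.
have lq_eq : free_lq q T 0 (fun i => point_comb (s i) \o dilate t) =
             free_lq q setT 0 (fun i => point_comb (s i)).
  by apply: free_lq_comp => i; exact: free_norm_dilate (hloc i).
have rad_eq : free_rademacher T 0 (fun i => point_comb (s i) \o dilate t) =
              free_rademacher setT 0 (fun i => point_comb (s i)).
  apply: free_rademacher_comp => e; apply: free_norm_dilate t0 A0 AT _.
  exact: free_local_signed_sum.
by rewrite /cotype_fails lq_eq rad_eq.
Qed.

Lemma cotype_fails_point_comb q K n (phi : 'I_n -> (X -> R) -> R) : 0 < q -> 0 < K ->
  (forall i, in_free setT 0 (phi i)) -> cotype_fails q (4 * K) setT 0 phi ->
  exists s : 'I_n -> seq (R * X), cotype_fails q K setT 0 (fun i => point_comb (s i)).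
Proof.
move=> q0 K0 hphi; rewrite /cotype_fails => hfail.
have bphi i : lip_bounded setT 0 (phi i) by apply: in_free_lip_bounded.
set L := free_lq q setT 0 phi in hfail.
have L0 : 0 < L by apply: le_lt_trans hfail; rewrite !mulr_ge0 ?rad_mean_ge0 // ltW.
pose a i := free_norm setT 0 (phi i).
(* Errors [delta i <= eta] move each signed sum by at most [n eta <= L / (4 K)];
   [delta i <= a i / 2] keeps each norm above half of [a i]. *)
pose eta := L / (4 * K) / (n%:R + 1).
have eta0 : 0 < eta by rewrite !divr_gt0 ?mulr_gt0 ?ltr_wpDl.
pose delta i := if 0 < a i then Num.min (a i / 2) eta else eta.
have delta0 i : 0 < delta i.
  by rewrite /delta; case: ifP => // ai0; rewrite lt_min eta0 divr_gt0.
have delta_eta i : delta i <= eta.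
  by rewrite /delta; case: ifP => // _; rewrite ge_min lexx orbT.
have [s hs] := point_comb_approx hphi delta0.
have half i : a i / 2 <= free_norm setT 0 (point_comb (s i)).
  apply: (half_le_of_leD (free_norm_ge0 _ _ _) _ (d := delta i)).
    by apply: free_norm_leD => [|f hf]; [exact: point_comb_lip_bounded | exact: hs].
  by move=> ai0; rewrite /delta ai0 ge_min lexx.
have sums_close e : free_norm setT 0 (signed_sum (fun i => point_comb (s i)) e) <=
                    free_norm setT 0 (signed_sum phi e) + n%:R * eta.
  apply: free_norm_leD => [|f hf]; first exact: lip_bounded_signed_sum.
  apply: le_trans (signed_sum_dist _ _ _ _) _.
  apply: le_trans (_ : \sum_(i < n) eta <= _).
    by apply: ler_sum => i _; rewrite distrC; exact: le_trans (hs i f hf) (delta_eta i).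
  by rewrite sumr_const card_ord mulr_natl.
have c_small : 4 * K * (n%:R * eta) <= L.
  have -> : 4 * K * (n%:R * eta) = n%:R * L / (n%:R + 1).
    by rewrite /eta; field; rewrite ?gt_eqF ?ltr_wpDl.
  by rewrite ler_pdivrMr ?ltr_wpDl // mulrDr mulr1 mulrC lerDl ltW.
exists s; rewrite /cotype_fails /free_lq.
apply: lt_le_trans (lq_norm_half q0 (fun i => free_norm_ge0 _ _ _) half).
apply: (rad_mean_perturb K0 _ _ sums_close c_small hfail).
- by apply: mulr_ge0 => //; exact: ltW.
- by move=> e; exact: free_norm_ge0.
Qed.

End PointComb.

(* If [F] does not cluster at [l], it contains a set missing a neighbourhood of [l],
   hence the finitely many terms outside that neighbourhood. *)
Lemma compact_range_cvg {T : topologicalType} (y : nat -> T) l :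
  y @ \oo --> l -> range y l -> compact (range y).
Proof.
move=> yl Rl F PF FA.
have [cl|ncl] := pselect (cluster F l); first by exists l.
have [A [B [FAA [nB AB0]]]] : exists A B, F A /\ nbhs l B /\ A `&` B = set0.
  apply: contrapT => hn; apply: ncl => A B FAA nB.
  by apply/set0P/eqP => AB; apply: hn; exists A, B.
have [N _ hN] := yl B nB.
have F_head : F (y @` [set n | (n < N)%N]).
  apply: filterS (filterI FA FAA) => _ [[n _ <-] An].
  exists n => //=; rewrite ltnNge; apply/negP => Nn.
  have : (A `&` B) (y n) by split => //; exact: hN.
  by rewrite AB0.
have [z [[n _ <-] cz]] := finite_compact (finite_image y (finite_II N)) PF F_head.
by exists (y n); split => //; exists n.
Qed.

Section BlockEnumeration.
Context {R : realType} {X : normedModType R}.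
Variable B : nat -> seq X.

Definition blocks_prefix K : seq X := flatten (map B (iota 0 K)).

Definition enum_blocks n : X := nth 0 (blocks_prefix n.+1) n.

Lemma blocks_prefixS K : blocks_prefix K.+1 = blocks_prefix K ++ B K.
Proof. by rewrite /blocks_prefix -addn1 iotaD map_cat flatten_cat /= cats0. Qed.

Lemma blocks_prefixD K d : exists r, blocks_prefix (K + d) = blocks_prefix K ++ r /\
  forall y, y \in r -> exists2 k, (K <= k)%N & y \in B k.
Proof.
elim: d => [|d [r [hr hy]]]; first by exists [::]; rewrite addn0 cats0.
exists (r ++ B (K + d)); split; first by rewrite addnS blocks_prefixS hr catA.
move=> y; rewrite mem_cat => /orP[/hy //|yB].
by exists (K + d)%N => //; exact: leq_addr.
Qed.

Hypothesis B_neq0 : forall k, B k != [::].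

Lemma size_blocks_prefix K : (K <= size (blocks_prefix K))%N.
Proof.
elim: K => // K IH; rewrite blocks_prefixS size_cat.
have : (0 < size (B K))%N by rewrite lt0n size_eq0.
lia.
Qed.

Lemma enum_blocksE K i : (i < size (blocks_prefix K))%N ->
  enum_blocks i = nth 0 (blocks_prefix K) i.
Proof.
move=> iK.
have [r1 [h1 _]] := blocks_prefixD i.+1 K.
have [r2 [h2 _]] := blocks_prefixD K i.+1.
have hi : (i < size (blocks_prefix i.+1))%N := size_blocks_prefix i.+1.
have e1 : nth 0 (blocks_prefix (i.+1 + K)) i = nth 0 (blocks_prefix i.+1) i.
  by rewrite h1 nth_cat hi.
have e2 : nth 0 (blocks_prefix (K + i.+1)) i = nth 0 (blocks_prefix K) i.
  by rewrite h2 nth_cat iK.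
by rewrite /enum_blocks -e1 addnC e2.
Qed.

Lemma range_enum_blocks k y : y \in B k -> range enum_blocks y.
Proof.
move=> yB; have yL : y \in blocks_prefix k.+1 by rewrite blocks_prefixS mem_cat yB orbT.
exists (index y (blocks_prefix k.+1)) => //.
by rewrite (@enum_blocksE k.+1) ?index_mem // nth_index.
Qed.

Lemma enum_blocks_cvg0 : (forall k y, y \in B k -> `|y| <= k.+1%:R^-1) ->
  enum_blocks @ \oo --> (0 : X).
Proof.
move=> B_small; apply/cvgr0Pnorm_lt => e e0.
pose K := Num.bound e^-1.
have hK : e^-1 < K%:R by apply: archi_boundP; rewrite invr_ge0 ltW.
exists (size (blocks_prefix K)) => // n /= hn.
have [r [hr hr']] := blocks_prefixD K (n.+1 - K).
have Kn : (K <= n.+1)%N.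
  by apply: leq_trans (size_blocks_prefix K) _; exact: leq_trans hn _.
rewrite /enum_blocks -(subnKC Kn) hr nth_cat ltnNge hn /=.
have [hlt|hge] := ltnP (n - size (blocks_prefix K)) (size r); last first.
  by rewrite nth_default // normr0.
have [k Kk yk] := hr' _ (mem_nth 0 hlt).
apply: le_lt_trans (B_small _ _ yk) _.
rewrite -[e]invrK ltf_pV2 ?posrE ?invr_gt0 ?ltr0n //.
by apply: lt_le_trans hK _; rewrite ler_nat; lia.
Qed.

End BlockEnumeration.

Section NullSequence.
Context {R : realType} {X : normedModType R}.

Lemma exists_small_dilation n (s : 'I_n -> seq (R * X)) (r : R) : 0 < r ->
  exists2 t : R, 0 < t & forall i c, c \in s i -> `|t *: c.2| <= r.
Proof.
move=> r0; pose M := \sum_(i < n) \sum_(c <- s i) `|c.2|.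
have M0 : 0 <= M by apply: sumr_ge0 => i _; exact: sumr_ge0.
have M1 : 0 < 1 + M by lra.
exists (r / (1 + M)) => [|i c ci]; first exact: divr_gt0.
have cM : `|c.2| <= M.
  apply: le_trans (_ : \sum_(c <- s i) `|c.2| <= M).
    by rewrite (big_rem _ ci) /= lerDl sumr_ge0.
  by rewrite /M (bigD1 i) //= lerDl sumr_ge0 // => j _; exact: sumr_ge0.
rewrite normrZ gtr0_norm ?divr_gt0 // mulrAC ler_pdivrMr // ler_wpM2l ?ltW //.
lra.
Qed.

Lemma cotype_fails_le q C K S p n (phi : 'I_n -> (X -> R) -> R) : C <= K ->
  cotype_fails q K S p phi -> cotype_fails q C S p phi.
Proof.
move=> CK; apply: le_lt_trans; apply: ler_wpM2r CK; exact: rad_mean_ge0.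
Qed.

Lemma not_free_cotype_point_comb q K : 0 < q -> 0 < K -> ~ free_cotype q [set: X] 0 ->
  exists n (s : 'I_n -> seq (R * X)), cotype_fails q K setT 0 (fun i => point_comb (s i)).
Proof.
move=> q0 K0 hq; apply: contrapT => hK; apply: hq.
exists (4 * K); split=> [|n phi hphi]; first exact: mulr_gt0.
rewrite leNgt; apply/negP => hfail; apply: hK.
have [s hs] := cotype_fails_point_comb q0 K0 hphi hfail.
by exists n, s.
Qed.

Lemma null_sequence_of_cotype_fails (qs Ks : nat -> R) :
  (forall k, exists n (s : 'I_n -> seq (R * X)),
     cotype_fails (qs k) (Ks k) setT 0 (fun i => point_comb (s i))) ->
  exists x : nat -> X, [/\ x @ \oo --> (0 : X), range x 0 &
    forall k, exists n (phi : 'I_n -> (X -> R) -> R),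
      (forall i, in_free (range x) 0 (phi i)) /\
      cotype_fails (qs k) (Ks k) (range x) 0 phi].
Proof.
move=> hk.
suff /choice[D hD] : forall k, exists d : {n : nat & ('I_n -> seq (R * X)) * R},
    [/\ cotype_fails (qs k) (Ks k) setT 0 (fun i => point_comb ((projT2 d).1 i)),
        0 < (projT2 d).2 &
        forall i c, c \in (projT2 d).1 i -> `|(projT2 d).2 *: c.2| <= k.+1%:R^-1].
  pose t k := (projT2 (D k)).2.
  pose pts k := flatten [seq (projT2 (D k)).1 i | i <- enum 'I_(projT1 (D k))].
  pose B k := (0 : X) :: [seq t k *: c.2 | c <- pts k].
  have B_neq0 k : B k != [::] by [].
  have B_small k y : y \in B k -> `|y| <= k.+1%:R^-1.
    rewrite inE => /orP[/eqP ->|/mapP[c /flattenP[s /mapP[i _ ->] ci] ->]].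
      by rewrite normr0 invr_ge0.
    by have [_ _ /(_ i c ci)] := hD k.
  have x_range := range_enum_blocks B_neq0.
  have x0 : range (enum_blocks B) 0 by apply: (x_range 0%N); rewrite inE eqxx.
  exists (enum_blocks B); split=> [||k]; [exact: enum_blocks_cvg0 | exact: x0 |].
  have [hfail t0 _] := hD k.
  have in_range i c : c \in (projT2 (D k)).1 i -> range (enum_blocks B) (t k *: c.2).
    move=> ci; apply: (x_range k); rewrite inE; apply/orP; right; apply: map_f.
    by apply/flattenP; exists ((projT2 (D k)).1 i) => //; apply: map_f; rewrite mem_enum.
  exists (projT1 (D k)), (fun i => point_comb ((projT2 (D k)).1 i) \o dilate (t k)).
  split; last exact: cotype_fails_dilate t0 x0 in_range hfail.
  move=> i; rewrite point_comb_dilate.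
  by apply: in_free_point_comb => _ /mapP[c ci ->]; exact: in_range ci.
move=> k; have [n [s hs]] := hk k.
have [t t0 ht] : exists2 t : R, 0 < t &
    forall i c, c \in s i -> `|t *: c.2| <= k.+1%:R^-1.
  by apply: exists_small_dilation; rewrite invr_gt0.
by exists (existT _ n (s, t)).
Qed.

Lemma free_cotype_of_null_sequences q : 0 < q ->
  (forall x : nat -> X, x @ \oo --> (0 : X) ->
     forall p, range x p -> free_cotype q (range x) p) ->
  free_cotype q [set: X] 0.
Proof.
move=> q0 hnull; apply: contrapT => hq.
have [x [x_cvg x0 hx]] := @null_sequence_of_cotype_fails (fun=> q) (fun k => k.+1%:R)
  (fun k => not_free_cotype_point_comb q0 (ltr0Sn _ k) hq).
have [C [C0 hC]] := hnull x x_cvg 0 x0.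
pose k := Num.bound C.
have Ck : C <= k.+1%:R.
  by apply/ltW/(lt_le_trans (archi_boundP (ltW C0))); rewrite ler_nat.
have [n [phi [hphi hfail]]] := hx k.
have := lt_le_trans (cotype_fails_le Ck hfail) (hC n phi hphi).
by rewrite ltxx.
Qed.

Lemma free_rad_cotype_of_null_sequences :
  (forall x : nat -> X, x @ \oo --> (0 : X) ->
     forall p, range x p -> free_rad_cotype (range x) p) ->
  free_rad_cotype [set: X] 0.
Proof.
move=> hnull; apply: contrapT => hrad.
have hfails k : exists n (s : 'I_n -> seq (R * X)),
    cotype_fails k.+2%:R k.+1%:R setT 0 (fun i => point_comb (s i)).
  apply: not_free_cotype_point_comb => // hq; apply: hrad.
  by exists k.+2%:R; split; rewrite // ler_nat.
have [x [x_cvg x0 hx]] := null_sequence_of_cotype_fails hfails.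
have [q [q2 [C [C0 hC]]]] := hnull x x_cvg 0 x0.
have C_max : C <= Num.max C q by rewrite le_max lexx.
have q_max : q <= Num.max C q by rewrite le_max lexx orbT.
pose k := Num.bound (Num.max C q).
have max_k : Num.max C q < k%:R by apply: archi_boundP; rewrite (le_trans (ltW C0)).
have Ck : C <= k.+1%:R.
  by apply/ltW/(le_lt_trans C_max)/(lt_le_trans max_k); rewrite ler_nat.
have qk : q <= k.+2%:R.
  by apply/ltW/(le_lt_trans q_max)/(lt_le_trans max_k); rewrite ler_nat; lia.
have [n [phi [hphi hfail]]] := hx k.
have fail_q : cotype_fails q C (range x) 0 phi.
  apply: lt_le_trans (cotype_fails_le Ck hfail) _.
  apply: lq_norm_antitone qk _ => [|i]; [lra | exact: free_norm_ge0].
have := lt_le_trans fail_q (hC n phi hphi).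
by rewrite ltxx.
Qed.

Lemma hereditary_tfae (Q : set X -> X -> Prop) :
  (forall S T p p', T `<=` S -> T p -> S p' -> Q S p' -> Q T p) ->
  ((forall x : nat -> X, x @ \oo --> (0 : X) -> forall p, range x p -> Q (range x) p) ->
     Q [set: X] 0) ->
  [<-> Q [set: X] 0;
       forall K : set X, compact K -> forall p, K p -> Q K p;
       forall K : set X, compact K -> countable K -> forall p, K p -> Q K p;
       forall x : nat -> X, x @ \oo --> (0 : X) -> forall p, range x p -> Q (range x) p].
Proof.
move=> Q_hereditary Q_null; tfae.
- by move=> QX K _ p Kp; exact: (Q_hereditary _ _ _ _ (subsetT K) Kp I QX).
- by move=> QK K cK _; exact: QK.
- move=> QK x x_cvg p xp.
  pose y n := if n is m.+1 then x m else 0.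
  have y_cvg : y @ \oo --> (0 : X) by rewrite -cvg_shiftS.
  have y0 : range y 0 by exists 0%N.
  have xy : range x `<=` range y by move=> _ [m _ <-]; exists m.+1.
  apply: (Q_hereditary _ _ _ _ xy xp y0); apply: (QK _ _ _ _ y0).
    exact: compact_range_cvg y_cvg y0.
  exact: card_image_le.
- exact: Q_null.
Qed.

End NullSequence.

Unset Implicit Arguments.

Theorem proposition5p4 (R : realType) (X : completeNormedModType R) :
  (forall q : R, 2 <= q ->
    [<-> free_cotype q [set: X] 0;
         forall K : set X, compact K -> forall p, K p -> free_cotype q K p;
         forall K : set X, compact K -> countable K -> forall p, K p -> free_cotype q K p;
         forall x : nat -> X, x @ \oo --> (0 : X) ->
           forall p, range x p -> free_cotype q (range x) p]) /\
  [<-> free_rad_cotype [set: X] 0;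
       forall K : set X, compact K -> forall p, K p -> free_rad_cotype K p;
       forall K : set X, compact K -> countable K -> forall p, K p -> free_rad_cotype K p;
       forall x : nat -> X, x @ \oo --> (0 : X) ->
         forall p, range x p -> free_rad_cotype (range x) p].
Proof.
split=> [q q2|].
  apply: (@hereditary_tfae R X (free_cotype q)); first exact: free_cotype_restrict.
  by apply: free_cotype_of_null_sequences; exact: lt_le_trans q2.
apply: (@hereditary_tfae R X free_rad_cotype); first exact: free_rad_cotype_restrict.
exact: free_rad_cotype_of_null_sequences.
Qed.
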